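(* Let $G=G_{1}\times\cdots\times G_{d}$ be a direct product where each $G_j$ is $k_j$-regular with $k_j\geq 1$. If, for each $j$, the adjacency eigenvalues of $G_j$ are integers all having the same 2-adic valuation $\nu_2$, then for every vertex $u$ of $G$, $\uparrow^{2}G$ has Laplacian perfect state transfer between $(0,u)$ and $(1,u)$.
   Context: All graphs are simple, undirected and unweighted. The direct product $G\times H$ is the graph with adjacency matrix $A(G)\otimes A(H)$. For a nonzero integer $n$, $\nu_2(n)$ is the exponent of the largest power of $2$ dividing $n$, and $\nu_2(0)=\infty$. The blow-up $\uparrow^{2}G$ has vertex set $\mathbb{Z}_2\times V(G)$, with $(l,u)\sim(m,v)$ iff $u\sim v$ in $G$. For a graph $X$ with Laplacian $L=D-A$, $U(t)=\exp(itL)$, and $X$ has Laplacian perfect state transfer between vertices $a,b$ if $U(\tau)\mathbf{e}_a=\gamma\mathbf{e}_b$ for some $\tau>0$ and $\gamma\in\mathbb{C}$. *)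

From HB Require Import structures.
From mathcomp Require Import all_boot all_order all_algebra.
From mathcomp Require Import complex.
From mathcomp Require Import all_classical all_reals all_analysis.

Set Implicit Arguments.
Unset Strict Implicit.
Unset Printing Implicit Defensive.

Import Order.TTheory GRing.Theory Num.Theory.
Import numFieldTopology.Exports numFieldNormedType.Exports.
Local Open Scope ring_scope.
Local Open Scope complex_scope.
Local Open Scope classical_set_scope.
Local Open Scope ring_scope.

Definition simple_graph (T : finType) (e : rel T) : Prop :=
  symmetric e /\ irreflexive e.

Definition regular (T : finType) (e : rel T) (k : nat) : Prop :=
  forall v : T, #|[set w | e v w]| = k.

Definition adjmx (F : nzRingType) (T : finType) (e : rel T) : 'M[F]_#|T| :=
  \matrix_(i, j) (e (enum_val i) (enum_val j))%:R.

Definition degmx (F : nzRingType) (T : finType) (e : rel T) : 'M[F]_#|T| :=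
  \matrix_(i, j) ((i == j)%:R * (#|[set w | e (enum_val i) w]|)%:R).

Definition lapmx (F : nzRingType) (T : finType) (e : rel T) : 'M[F]_#|T| :=
  degmx F e - adjmx F e.

Definition expm_partial (F : fieldType) (n : nat) (M : 'M[F]_n) (N : nat) : 'M[F]_n :=
  \sum_(k < N) ((k`!)%:R)^-1 *: iter k (mulmx M) 1%:M.

Definition basis_vec (F : nzRingType) (T : finType) (a : T) : 'cV[F]_#|T| :=
  \col_i (enum_val i == a)%:R.

(* Laplacian perfect state transfer between a and b:
   exists tau > 0 and gamma with exp(i tau L) e_a = gamma e_b, where the
   matrix exponential is the limit of its partial sums (entrywise). *)
Definition lap_PST (R : realType) (T : finType) (e : rel T) (a b : T) : Prop :=
  exists tau : R, 0 < tau /\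
  exists gamma : R[i],
    forall x : 'I_#|T|,
      (fun N : nat =>
         ((expm_partial (((0 +i* tau)%C : R[i]) *: lapmx R[i] e) N
            *m basis_vec R[i] a) x ord0 : (R[i] : numClosedFieldType))) @ \oo
      --> (gamma * basis_vec R[i] b x ord0 : (R[i] : numClosedFieldType)).

Definition dprod_rel (d : nat) (V : 'I_d -> finType) (E : forall j, rel (V j))
  : rel {dffun forall j : 'I_d, V j} :=
  fun f g => [forall j, E j (f j) (g j)].

Definition blowup2 (T : finType) (e : rel T) : rel ('I_2 * T) :=
  fun x y => e x.2 y.2.

(* 2-adic valuation with nu2 0 = infinity (None). *)
Definition nu2 (z : int) : option nat :=
  if z == 0 then None else Some (logn 2 `|z|%N).

From HB Require Import structures.
From mathcomp Require Import all_boot all_order all_algebra.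
From mathcomp Require Import complex.
From mathcomp Require Import all_classical all_reals all_analysis.
From mathcomp Require Import ring zify.
Set Implicit Arguments.
Unset Strict Implicit.
Unset Printing Implicit Defensive.

Import Order.TTheory GRing.Theory Num.Theory.
Import numFieldTopology.Exports numFieldNormedType.Exports.
Local Open Scope classical_set_scope.
Local Open Scope ring_scope.
Local Open Scope complex_scope.
Local Open Scope sesquilinear_scope.

(* The indicator of u_j is a sum of adjacency eigenfunctions of G_j (a real
   symmetric matrix is unitarily diagonalisable), whose eigenvalues are 2^m_j
   times odd integers; they cannot all vanish because k_j >= 1.  Products of
   these give adjacency eigenfunctions F_g of G summing to the indicator of u,
   with eigenvalues lambda_g = 2^M * odd, M = m_1 + ... + m_d.  The blow-up is
   2k-regular, k = k_1 ... k_d, so (l, y) |-> F_g y and (l, y) |-> (-1)^l [y = u]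
   are Laplacian eigenvectors with eigenvalues 2k - 2 lambda_g and 2k.  The
   indicators of (0, u) and (1, u) are half the sum of the former plus, resp.
   minus, half the latter, and at time pi / 2^(M+1) the phase of each of the
   former differs from that of the latter by exp(-i pi (2q+1)) = -1. *)

Definition two_pow_odd (R : pzRingType) (m : nat) (x : R) : Prop :=
  exists q : int, x = 2 ^+ m * (2 * q%:~R + 1).

Lemma nu2_Some_odd (z : int) m :
  nu2 z = Some m -> exists q : int, z = 2 ^+ m * (2 * q + 1).
Proof.
rewrite /nu2; case: eqP => // /eqP z_neq0 [<-].
have z_gt0 : (0 < `|z|)%N by rewrite absz_gt0.
have [t] := pfactor_coprime (isT : prime 2) z_gt0.
rewrite coprime_sym coprimen2 => t_odd.
have t_half : t = (t./2).*2.+1 by rewrite -[in LHS](odd_double_half t) t_odd.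
have -> : 2 ^+ logn 2 `|z| = (2 ^ logn 2 `|z|)%N :> int by rewrite -natz natrX.
move: (2 ^ _)%N => P.
case: z z_neq0 {z_gt0} => n _ /= n_eq.
- by exists (t./2)%:Z; rewrite n_eq {1}t_half; lia.
- by exists (- (t./2)%:Z - 1); rewrite NegzE n_eq {1}t_half; lia.
Qed.

Lemma two_pow_odd_nu2 (R : pzRingType) (z : int) m :
  nu2 z = Some m -> two_pow_odd m (z%:~R : R).
Proof.
move=> /nu2_Some_odd[q ->]; exists q.
by rewrite intrM intrD intrM rmorphXn !rmorph_nat rmorph1.
Qed.

Lemma two_pow_odd_prod (R : comPzRingType) (I : finType) (x : I -> R) (m : I -> nat) :
  (forall i, two_pow_odd (m i) (x i)) -> two_pow_odd (\sum_i m i) (\prod_i x i).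
Proof.
move=> x_odd; apply: (big_ind2 (fun n c => two_pow_odd n c)) => //.
  by exists 0; rewrite rmorph0 mulr0 add0r mulr1.
move=> n1 c1 n2 c2 [q1 ->] [q2 ->]; exists (2 * q1 * q2 + q1 + q2).
by rewrite !rmorphD !rmorphM rmorph_nat exprD; ring.
Qed.

Section ExpI.
Variable R : realType.
Local Notation C := (R[i] : numClosedFieldType).

Definition expi (t : R) : C := (cos t)%:C + 'i * (sin t)%:C.

Lemma expiDpi (x : R) : expi (x + pi) = - expi x.
Proof. by rewrite /expi cosDpi sinDpi !rmorphN mulrN opprD. Qed.

Lemma expiD_oddn_pi (x : R) n : expi (x + pi *+ (2 * n).+1) = - expi x.
Proof.
elim: n => [|n IHn]; first by rewrite expiDpi.
have -> : x + pi *+ (2 * n.+1).+1 = x + pi *+ (2 * n).+1 + pi + pi.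
  by rewrite mulnS add2n; ring.
by rewrite !expiDpi IHn opprK.
Qed.

Lemma expiB_odd_pi (x : R) (q : int) :
  expi (x - pi * (2 * q%:~R + 1)) = - expi x.
Proof.
case: q => n.
  have -> : pi * (2 * n%:R + 1) = pi *+ (2 * n).+1 :> R by ring.
  by rewrite -[in RHS](subrK (pi *+ (2 * n).+1) x) expiD_oddn_pi opprK.
have -> : pi * (2 * (Negz n)%:~R + 1) = - pi *+ (2 * n).+1 :> R.
  by rewrite NegzE mulrNz; ring.
by rewrite mulNrn opprK expiD_oddn_pi.
Qed.

Lemma expi_two_pow_odd (x c : R) M : two_pow_odd M c ->
  expi (pi / 2 ^+ M.+1 * (x - 2 * c)) = - expi (pi / 2 ^+ M.+1 * x).
Proof.
move=> [q ->]; rewrite -(expiB_odd_pi _ q); congr expi; rewrite exprS; field.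
by rewrite expf_neq0 // pnatr_eq0.
Qed.

Lemma expi_coeff (t : R) k :
  (k`!%:R : C)^-1 * ('i * t%:C) ^+ k = (cos_coeff t k)%:C + 'i * (sin_coeff t k)%:C.
Proof.
have expi_parity : ('i : C) ^+ k = 'i ^+ odd k * (-1) ^+ k./2.
  by rewrite -[in LHS](odd_double_half k) exprD -muln2 mulnC exprM sqr_i.
rewrite /cos_coeff /sin_coeff /= -exprnP exprMn expi_parity.
rewrite !rmorphM !rmorphXn (rmorphN1 (real_complex R)) fmorphV !rmorph_nat.
case: (boolP (odd k)) => [k_odd|_] /=; last by ring.
have -> : k.-1./2 = k./2 by rewrite -[in LHS](odd_double_half k) k_odd /= doubleK.
ring.
Qed.

Lemma normc_real (r : R) : `|r%:C| = `|r|%:C :> C.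
Proof. by rewrite normc_def /= expr0n addr0 sqrtr_sqr. Qed.

Lemma cvg_real_complex (u : R^nat) (a : R) :
  u @ \oo --> a -> (fun n => (u n)%:C : C) @ \oo --> (a%:C : C).
Proof.
move=> /cvgrPdist_lt u_a; apply/cvgrPdist_lt => e e_gt0.
have [r e_r] : exists r : R, e = r%:C by apply/complex_realP; exact: gtr0_real.
move: e_gt0; rewrite e_r ltcE /= => /andP[_ r_gt0].
apply: filterS (u_a r r_gt0) => n.
by rewrite -rmorphB normc_real ltcR.
Qed.

Lemma cvg_expi_series (t : R) :
  (fun N => \sum_(k < N) (k`!%:R : C)^-1 * ('i * t%:C) ^+ k) @ \oo --> expi t.
Proof.
have -> : (fun N => \sum_(k < N) (k`!%:R : C)^-1 * ('i * t%:C) ^+ k) =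
    (fun N => (series (cos_coeff t) N)%:C + 'i * (series (sin_coeff t) N)%:C).
  apply/funext => N; rewrite /series /= !big_mkord.
  under eq_bigr do rewrite expi_coeff.
  by rewrite big_split /= -mulr_sumr !rmorph_sum.
apply: cvgD; last apply: cvgMl_tmp; apply: cvg_real_complex.
- by rewrite cos.unlock; exact: is_cvg_series_cos_coeff.
- by rewrite sin.unlock; exact: is_cvg_series_sin_coeff.
Qed.

Lemma expm_partial_eigenvec n (M : 'M[C]_n) (w : 'cV[C]_n) (mu s : C) N :
  M *m w = mu *: w ->
  expm_partial (s *: M) N *m w = (\sum_(k < N) (k`!%:R)^-1 * (s * mu) ^+ k) *: w.
Proof.
move=> Mw; have iter_w k : iter k (mulmx (s *: M)) 1%:M *m w = (s * mu) ^+ k *: w.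
  elim: k => [|k IHk]; first by rewrite mul1mx scale1r.
  rewrite iterS -mulmxA IHk -scalemxAl -scalemxAr Mw !scalerA exprSr.
  by rewrite [s * _]mulrC -mulrA.
rewrite /expm_partial mulmx_suml scaler_suml; apply: eq_bigr => k _.
by rewrite -scalemxAl iter_w scalerA.
Qed.

Lemma cvg_expm_eigenvec n (M : 'M[C]_n) (w : 'cV[C]_n) (tau a : R) x :
  M *m w = a%:C *: w ->
  (fun N => (expm_partial ((0 +i* tau)%C *: M) N *m w) x ord0) @ \oo -->
  expi (tau * a) * w x ord0.
Proof.
move=> Mw; under eq_fun do rewrite (expm_partial_eigenvec _ _ Mw) mxE.
have -> : (0 +i* tau)%C * a%:C = 'i * (tau * a)%:C :> C.
  by apply/eqP; rewrite eq_complex /=; apply/andP; split; apply/eqP; ring.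
by apply: cvgMr_tmp; exact: cvg_expi_series.
Qed.

Lemma lap_PST_eigenvecs (T : finType) (e : rel T) (a b : T) (I : Type)
    (s : seq I) (w w' : I -> 'cV[C]_#|T|) (theta : I -> R) (tau : R) (gamma : C) :
  0 < tau ->
  (forall r, lapmx C e *m w r = (theta r)%:C *: w r) ->
  (forall r, expi (tau * theta r) *: w r = gamma *: w' r) ->
  basis_vec C a = \sum_(r <- s) w r -> basis_vec C b = \sum_(r <- s) w' r ->
  lap_PST R e a b.
Proof.
move=> tau_gt0 eig phase ea eb; exists tau; split => //; exists gamma => x.
rewrite ea eb summxE mulr_sumr.
under eq_fun do rewrite mulmx_sumr summxE.
apply: (cvg_big add_continuous) => // r _.
have -> : gamma * w' r x ord0 = expi (tau * theta r) * w r x ord0.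
  by move/matrixP/(_ x ord0): (phase r); rewrite !mxE.
exact: cvg_expm_eigenvec.
Qed.

End ExpI.

Section AdjacencyEigenfunctions.
Variables (F : nzRingType) (T : finType).
Implicit Types (e : rel T) (f g : T -> F).

Definition col_of f : 'cV[F]_#|T| := \col_i f (enum_val i).

Definition adj_eigen e (lam : F) f : Prop :=
  forall x, \sum_y (e x y)%:R * f y = lam * f x.

Lemma eq_col_of f g : f =1 g -> col_of f = col_of g.
Proof. by move=> fg; apply/matrixP => i j; rewrite !mxE fg. Qed.

Lemma col_ofD f g : col_of f + col_of g = col_of (fun y => f y + g y).
Proof. by apply/matrixP => i j; rewrite !mxE. Qed.

Lemma col_ofZ (c : F) f : c *: col_of f = col_of (fun y => c * f y).
Proof. by apply/matrixP => i j; rewrite !mxE. Qed.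

Lemma col_of_sum (I : finType) (f : I -> T -> F) :
  \sum_r col_of (f r) = col_of (fun y => \sum_r f r y).
Proof.
by apply/matrixP => i j; rewrite summxE !mxE; apply: eq_bigr => r _; rewrite mxE.
Qed.

Lemma basis_vecE a : basis_vec F a = col_of (fun y => (y == a)%:R).
Proof. by apply/matrixP => i j; rewrite !mxE. Qed.

Lemma lapmx_col_of e k lam f : regular e k -> adj_eigen e lam f ->
  lapmx F e *m col_of f = (k%:R - lam) *: col_of f.
Proof.
move=> e_reg f_eig; apply/matrixP => i j.
rewrite /lapmx mulmxBl !mxE mulrBl; congr (_ - _).
  rewrite (bigD1 i) //= big1 => [|l /negbTE l_i].
    by rewrite !mxE eqxx mul1r addr0 e_reg.
  by rewrite !mxE eq_sym l_i !mul0r.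
rewrite -f_eig [RHS](reindex _ (onW_bij _ (@enum_val_bij T))).
by apply: eq_bigr => l _; rewrite !mxE.
Qed.

End AdjacencyEigenfunctions.

Section SymmetricAdjacency.
Variables (C : numClosedFieldType) (T : finType) (e : rel T).
Local Notation A := (adjmx C e).
Local Notation P := (spectralmx A).

(* The l-th term of [e_a = P^-1 P e_a], with P the unitary spectral basis. *)
Definition spectral_eigenfun (a : T) (l : 'I_#|T|) (y : T) : C :=
  invmx P (enum_rank a) l * P l (enum_rank y).

Definition spectral_eigenval (l : 'I_#|T|) : C := spectral_diag A 0 l.

Lemma sum_spectral_eigenfun a y : \sum_l spectral_eigenfun a l y = (y == a)%:R.
Proof.
have : (invmx P *m P) (enum_rank a) (enum_rank y) =
    (1%:M : 'M[C]_#|T|) (enum_rank a) (enum_rank y).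
  by rewrite mulVmx // spectral_unit.
by rewrite !mxE (inj_eq enum_rank_inj) eq_sym => <-.
Qed.

Hypothesis e_sym : symmetric e.

Lemma adjmx_normal : A \is normalmx.
Proof.
apply/normalmxP; suff -> : A ^t* = A by [].
by apply/matrixP => i j; rewrite !mxE conjC_nat e_sym.
Qed.

Lemma spectralmx_adjmx : P *m A = diag_mx (spectral_diag A) *m P.
Proof.
have /orthomx_spectralP A_eq := adjmx_normal.
by rewrite [X in _ *m X = _]A_eq !mulmxA mulmxV ?spectral_unit // mul1mx.
Qed.

Lemma eigenvalue_spectral_eigenval l : eigenvalue A (spectral_eigenval l).
Proof.
apply/eigenvalueP; exists (row l P).
  by rewrite -row_mul spectralmx_adjmx mul_diag_mx; apply/rowP => j; rewrite !mxE.
apply/eqP => row0.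
have : row l (P *m invmx P) 0 l = row l (1%:M : 'M[C]_#|T|) 0 l.
  by rewrite mulmxV // spectral_unit.
by rewrite row_mul row0 mul0mx !mxE eqxx => /eqP; rewrite eq_sym oner_eq0.
Qed.

Lemma adj_eigen_spectral_eigenfun a l :
  adj_eigen e (spectral_eigenval l) (spectral_eigenfun a l).
Proof.
move=> x; rewrite /spectral_eigenfun.
have : (P *m A) l (enum_rank x) = (diag_mx (spectral_diag A) *m P) l (enum_rank x).
  by rewrite spectralmx_adjmx.
rewrite mul_diag_mx !mxE => PA_lx.
under eq_bigr do rewrite mulrCA.
rewrite -mulr_sumr mulrCA -PA_lx; congr (_ * _).
rewrite [RHS](reindex _ (onW_bij _ (@enum_rank_bij T))).
by apply: eq_bigr => y _; rewrite !mxE !enum_rankK e_sym mulrC.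
Qed.

Lemma adj_eigenvalues0_edgeless :
  (forall c, eigenvalue A c -> c = 0) -> forall x y, e x y = false.
Proof.
move=> eig0 x y; apply/negbTE/negP => exy.
have : (e x y)%:R = 0 :> C.
  transitivity (\sum_z (e x z)%:R * (z == y)%:R : C).
    by rewrite (bigD1 y) //= eqxx mulr1 big1 ?addr0 // => z /negbTE ->; rewrite mulr0.
  under eq_bigr do rewrite -sum_spectral_eigenfun mulr_sumr.
  rewrite exchange_big big1 // => l _.
  rewrite adj_eigen_spectral_eigenfun.
  by rewrite (eig0 _ (eigenvalue_spectral_eigenval l)) mul0r.
by rewrite exy => /eqP; rewrite oner_eq0.
Qed.

End SymmetricAdjacency.

Lemma adj_eigenvalues_two_pow_odd (C : numClosedFieldType) (T : finType) (e : rel T)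
    k (v : option nat) (x : T) :
  symmetric e -> regular e k -> (0 < k)%N ->
  (forall c, eigenvalue (adjmx C e) c -> exists z : int, c = z%:~R /\ nu2 z = v) ->
  exists m, forall c, eigenvalue (adjmx C e) c -> two_pow_odd m c.
Proof.
move=> e_sym e_reg k_gt0; case: v => [m|] eig_nu2.
  by exists m => c /eig_nu2[z [-> /two_pow_odd_nu2]].
have /card_gt0P[y] : (0 < #|[set y | e x y]|)%N by rewrite e_reg.
rewrite in_setE /mkset => exy; suff eig0 c : eigenvalue (adjmx C e) c -> c = 0.
  by rewrite (adj_eigenvalues0_edgeless e_sym eig0) in exy.
by move=> /eig_nu2[z [->]]; rewrite /nu2; case: eqP => // -> _; rewrite mulr0z.
Qed.

(* [regular] counts neighbourhoods given as classical sets. *)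
Lemma card_mkset (T : finType) (P : pred T) : #|[set x | P x]| = #|[set x | P x]%SET|.
Proof. by apply: eq_card => x; rewrite inE /in_mem /= /in_set asboolb. Qed.

Section ProdSumDffun.
Variables (R : comPzSemiRingType) (I : finType).

Lemma prod_sum_dffun (T_ : I -> finType) (F : forall i, T_ i -> R) :
  \prod_i \sum_(y : T_ i) F i y = \sum_(g : {dffun forall i, T_ i}) \prod_i F i (g i).
Proof.
rewrite [RHS](reindex _ (onW_bij _ (@dffun_of_fprod_bij I T_))) /=.
under [RHS]eq_bigr do under eq_bigr do rewrite ffunE -[F _ _](ffunE (fun y => F _ y)).
rewrite (@big_fprod R 0 1 *%R +%R I T_ (fun i => [ffun y => F i y])).
transitivity
  (\prod_i \sum_(j | tagged_with T_ i j) untag 0 [ffun y => F i y] j); last first.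
  exact: (bigA_distr_big_dep (fun i => tagged_with T_ i)
                             (fun i j => untag 0 [ffun y => F i y] j)).
apply: eq_bigr => i _.
transitivity (\sum_(y : T_ i) [ffun y => F i y] y).
  by apply: eq_bigr => y _; rewrite ffunE.
exact: (big_tag (fun i => [ffun y => F i y]) i).
Qed.

Lemma natr_forall (P : pred I) : [forall i, P i]%:R = \prod_i (P i)%:R :> R.
Proof.
case: (boolP [forall i, P i]) => [/forallP P_all|].
  by rewrite big1 // => i _; rewrite P_all.
rewrite negb_forall => /existsP[i /negbTE P_i].
by rewrite (bigD1 i) //= P_i mul0r.
Qed.

End ProdSumDffun.

Section DirectProduct.
Variables (d : nat) (V : 'I_d -> finType).

Lemma regular_dprod (E : forall j, rel (V j)) (k : 'I_d -> nat) :
  (forall j, regular (E j) (k j)) -> regular (dprod_rel E) (\prod_j k j).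
Proof.
move=> E_reg x; rewrite card_mkset.
under eq_bigr => j _ do rewrite -(E_reg j (x j)) card_mkset.
rewrite -cardsXn; apply: eq_card => y.
by rewrite in_setXn !inE /dprod_rel; apply: eq_forallb => j; rewrite inE.
Qed.

Variable R : comNzRingType.

Lemma adj_eigen_dprod (E : forall j, rel (V j)) (lam : 'I_d -> R)
    (f : forall j, V j -> R) :
  (forall j, adj_eigen (E j) (lam j) (f j)) ->
  adj_eigen (dprod_rel E) (\prod_j lam j) (fun x => \prod_j f j (x j)).
Proof.
move=> f_eig x; rewrite -big_split /=.
under eq_bigr do rewrite /dprod_rel natr_forall -big_split /=.
rewrite -(prod_sum_dffun (fun j z => (E j (x j) z)%:R * f j z)).
by apply: eq_bigr => j _; exact: f_eig.
Qed.

Lemma dprod_indicator (I_ : 'I_d -> finType) (f : forall j, I_ j -> V j -> R)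
    (u x : {dffun forall j, V j}) :
  (forall j y, \sum_l f j l y = (y == u j)%:R) ->
  \sum_(g : {dffun forall j, I_ j}) \prod_j f j (g j) (x j) = (x == u)%:R.
Proof.
move=> f_sum; rewrite -(prod_sum_dffun (fun j l => f j l (x j))).
under eq_bigr do rewrite f_sum.
suff <- : [forall j, x j == u j] = (x == u) by rewrite natr_forall.
by apply/forallP/eqP => [x_u|-> //]; apply/ffunP => j; exact/eqP/x_u.
Qed.

End DirectProduct.

Section BlowUp.
Variables (F : nzRingType) (T : finType) (e : rel T).

Lemma regular_blowup2 k : regular e k -> regular (blowup2 e) (2 * k)%N.
Proof.
move=> e_reg p; rewrite card_mkset -(e_reg p.2) card_mkset.
rewrite -[X in (X * _)%N](card_ord 2) -cardsT -cardsX; apply: eq_card => -[l y].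
by rewrite !inE.
Qed.

Lemma adj_eigen_blowup2 lam (f : T -> F) :
  adj_eigen e lam f -> adj_eigen (blowup2 e) (lam *+ 2) (fun p => f p.2).
Proof.
move=> f_eig p; rewrite /blowup2 -(pair_bigA _ (fun _ y => (e p.2 y)%:R * f y)) /=.
by rewrite sumr_const card_ord f_eig mulrnAl.
Qed.

Lemma adj_eigen_blowup2_alt (f : T -> F) :
  adj_eigen (blowup2 e) 0 (fun p => (-1) ^+ p.1 * f p.2).
Proof.
move=> p; rewrite mul0r /blowup2.
rewrite -(pair_bigA _ (fun (l : 'I_2) y => (e p.2 y)%:R * ((-1) ^+ l * f y))) /=.
rewrite !big_ord_recl big_ord0 addr0 -big_split big1 // => y _ /=.
by rewrite expr0 expr1 mul1r mulN1r mulrN addrN.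
Qed.

End BlowUp.

Section BlowUpPST.
Variables (R : realType) (T : finType) (e : rel T) (deg : nat) (u : T).
Variables (I : finType) (F : I -> T -> R[i]) (lam : I -> R[i]).
Local Notation C := (R[i] : numClosedFieldType).
Hypothesis e_reg : regular e deg.
Hypothesis F_eig : forall g, adj_eigen e (lam g) (F g).
Hypothesis F_sum : forall y, \sum_g F g y = (y == u)%:R.

Let v0 : 'cV[C]_#|{: 'I_2 * T}| :=
  col_of (fun p : 'I_2 * T => (-1) ^+ p.1 * (p.2 == u)%:R).
Let v g : 'cV[C]_#|{: 'I_2 * T}| := col_of (fun p : 'I_2 * T => F g p.2).

Lemma basis_vec_blowup2 (l : 'I_2) :
  basis_vec C (l, u) = 2^-1 *: ((-1) ^+ l *: v0 + \sum_g v g).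
Proof.
rewrite basis_vecE col_of_sum col_ofZ col_ofD col_ofZ; apply: eq_col_of => -[l' y] /=.
rewrite F_sum xpair_eqE.
case: l => -[|[|//]] ?; case: l' => -[|[|//]] ?; case: (y == u);
  by rewrite -val_eqE /=; field.
Qed.

Lemma lapmx_blowup2_sym g :
  lapmx C (blowup2 e) *m v g = ((2 * deg)%N%:R - lam g *+ 2) *: v g.
Proof. exact: lapmx_col_of (regular_blowup2 e_reg) (adj_eigen_blowup2 (F_eig g)). Qed.

Lemma lapmx_blowup2_alt : lapmx C (blowup2 e) *m v0 = (2 * deg)%N%:R *: v0.
Proof.
have := lapmx_col_of (regular_blowup2 e_reg)
  (adj_eigen_blowup2_alt e (fun y => (y == u)%:R : C)).
by rewrite subr0.
Qed.

Lemma lap_PST_blowup2 M : (forall g, two_pow_odd M (lam g)) ->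
  lap_PST R (blowup2 e) (ord0, u) (ord_max, u).
Proof.
move=> lam_odd.
have /fin_all_exists[c cP] g : exists c : R, c%:C = lam g /\ two_pow_odd M c.
  have [q lamE] := lam_odd g.
  exists (2 ^+ M * (2 * q%:~R + 1)); split; last by exists q.
  by rewrite lamE !(rmorphM, rmorphD, rmorphXn, rmorph_nat, rmorph_int, rmorph1).
pose D : R := (2 * deg)%N%:R.
pose theta r : R := D - if r is Some g then 2 * c g else 0.
pose w r := 2^-1 *: if r is Some g then v g else v0.
pose tau : R := pi / 2 ^+ M.+1.
apply: (@lap_PST_eigenvecs R _ _ _ _ _ (None :: map Some (index_enum I)) w
  (fun r => (if r is Some _ then 1 else -1) *: w r) theta tau (- expi (tau * D))).
- by rewrite divr_gt0 ?pi_gt0 ?exprn_gt0.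
- case=> [g|]; rewrite /w -scalemxAr.
    rewrite lapmx_blowup2_sym !scalerA mulrC -(cP g).1.
    by rewrite rmorphB rmorphM !rmorph_nat mulr_natl.
  by rewrite lapmx_blowup2_alt !scalerA mulrC /theta subr0 rmorph_nat.
- case=> [g|]; rewrite [RHS]scalerA; congr (_ *: _).
    by rewrite mulr1 /theta expi_two_pow_odd //; case: (cP g).
  by rewrite /theta subr0 mulrN1 opprK.
- by rewrite big_cons big_map /w -scaler_sumr -scalerDr basis_vec_blowup2 expr0 scale1r.
- rewrite big_cons big_map /=; under eq_bigr do rewrite scale1r.
  rewrite /w -scaler_sumr scalerA mulrC -scalerA -scalerDr.
  by rewrite basis_vec_blowup2 scaleN1r.
Qed.

End BlowUpPST.

Theorem theorem6 (R : realType) (d : nat) (V : 'I_d -> finType)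
  (E : forall j : 'I_d, rel (V j)) (k : 'I_d -> nat)
  (hd : (0 < d)%N)
  (hsimple : forall j, simple_graph (E j))
  (hreg : forall j, regular (E j) (k j))
  (hk : forall j, (1 <= k j)%N)
  (heig : forall j, exists v : option nat,
     forall a : R[i], eigenvalue (adjmx R[i] (E j)) a ->
       exists z : int, a = z%:~R /\ nu2 z = v) :
  forall u : {dffun forall j : 'I_d, V j},
    lap_PST R (blowup2 (dprod_rel E)) (ord0, u) (ord_max, u).
Proof.
move=> u.
have E_sym j : symmetric (E j) := (hsimple j).1.
have /fin_all_exists[m eig_m] j : exists mj, forall c,
    eigenvalue (adjmx R[i] (E j)) c -> two_pow_odd mj c.
  have [v eig_v] := heig j.
  exact: adj_eigenvalues_two_pow_odd (u j) (E_sym j) (hreg j) (hk j) eig_v.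
pose F (g : {dffun forall j, 'I_#|V j|}) (x : {dffun forall j, V j}) :=
  \prod_j spectral_eigenfun R[i] (E j) (u j) (g j) (x j).
pose lam (g : {dffun forall j, 'I_#|V j|}) :=
  \prod_j spectral_eigenval R[i] (E j) (g j).
have F_eig g : adj_eigen (dprod_rel E) (lam g) (F g).
  exact: adj_eigen_dprod
    (fun j => adj_eigen_spectral_eigenfun R[i] (E_sym j) (u j) (g j)).
have F_sum x : \sum_g F g x = (x == u)%:R.
  exact: dprod_indicator (fun j => sum_spectral_eigenfun R[i] (E j) (u j)).
have lam_odd g : two_pow_odd (\sum_j m j) (lam g).
  apply: two_pow_odd_prod => j.
  exact: eig_m (eigenvalue_spectral_eigenval R[i] (E_sym j) (g j)).
exact (lap_PST_blowup2 (regular_dprod hreg) F_eig F_sum lam_odd).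
Qed.
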